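(* Let $x^k\in\mathbb{R}^n$ and $0<\alpha\le 1/L$, and suppose the gradient balance condition $\|\omega(x^k)\|\le\|\psi(x^k)\|$ holds. Then the subspace ISTA step $x^{k+1}=x^k-\alpha\,\psi(x^k)$ satisfies $$F(x^{k+1})-F(x^* )\le\bigl(1-\tfrac12\lambda\alpha\bigr)\bigl(F(x^k)-F(x^* )\bigr).$$
   Context: $A\in\mathbb{R}^{n\times n}$ is symmetric positive definite, with smallest eigenvalue $\lambda>0$ and largest eigenvalue $L$. Further, $b\in\mathbb{R}^n$ and $\tau\ge 0$. Define $f(x)=\tfrac12 x^TAx-b^Tx$, $g(x)=Ax-b$, and $F(x)=f(x)+\tau\|x\|_1$. Let $x^*$ be the unique minimizer of $F$. Use the convention $\mathrm{sgn}(0)=0$; $\|\cdot\|$ is the Euclidean norm. For $\alpha>0$, $i=1,\dots,n$ and $g=g(x)$: - $\omega(x)_i=0$ if $x_i\ne0$; $\omega(x)_i=0$ if $x_i=0$ and $|g_i|\le\tau$; $\omega(x)_i=g_i-\tau\,\mathrm{sgn}(g_i)$ if $x_i=0$ and $|g_i|>\tau$. - $\psi(x)_i=\frac1\alpha\bigl(x_i-\max\{|x_i-\alpha g_i|-\alpha\tau,0\}\,\mathrm{sgn}(x_i-\alpha g_i)\bigr)$ if $x_i\ne0$, and $\psi(x)_i=0$ if $x_i=0$. *)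

(* R : rcfType (real closed field, so Num.sqrt exists). *)
From HB Require Import structures.
From mathcomp Require Import all_boot all_order all_algebra.
Set Implicit Arguments. Unset Strict Implicit. Unset Printing Implicit Defensive.
Import Order.TTheory GRing.Theory Num.Theory.
Local Open Scope ring_scope.

Section Defs.
Variables (R : rcfType) (n : nat).
Implicit Types (A : 'M[R]_n) (b x : 'cV[R]_n) (tau alpha : R).

Definition grad A b x : 'cV[R]_n := A *m x - b.

Definition fq A b x : R := 2^-1 * (x^T *m A *m x) 0 0 - (b^T *m x) 0 0.

Definition l1norm x : R := \sum_i `|x i 0|.

Definition enorm x : R := Num.sqrt (\sum_i x i 0 ^+ 2).

Definition Fobj A b tau x : R := fq A b x + tau * l1norm x.

(* Num.sg 0 = 0, matching sgn(0) = 0 *)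
Definition omega A b tau x : 'cV[R]_n :=
  \col_i (let g := grad A b x i 0 in
          if x i 0 != 0 then 0
          else if `|g| <= tau then 0
          else g - tau * Num.sg g).

Definition psi A b tau alpha x : 'cV[R]_n :=
  \col_i (let g := grad A b x i 0 in
          if x i 0 != 0 then
            alpha^-1 * (x i 0 - Num.max (`|x i 0 - alpha * g| - alpha * tau) 0
                                  * Num.sg (x i 0 - alpha * g))
          else 0).

Definition symmx A : Prop := A^T = A.
Definition posdef A : Prop := forall x : 'cV[R]_n, x != 0 -> 0 < (x^T *m A *m x) 0 0.

End Defs.

From HB Require Import structures.
From mathcomp Require Import all_boot all_order all_algebra.
From mathcomp Require Import complex ring lra.
Set Implicit Arguments. Unset Strict Implicit. Unset Printing Implicit Defensive.
Import Order.TTheory GRing.Theory Num.Theory.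
Local Open Scope ring_scope.

(* Write [F (x + v) = F x + Q_x (x + v) + v^T A v / 2 - |v|^2 / (2 alpha)], where
   [Q_x] is the separable quadratic model of the ISTA step at [x]; since
   [alpha <= 1/L], [F (x - alpha psi) <= F x + Q_x (x - alpha psi)].
   Each one-dimensional summand of [Q_x] is minimised by a soft thresholding, and
   its optimality gives [alpha/2 (psi_i^2 - omega_i^2) <= Q_i z - 2 Q_i (x_i - alpha psi_i)]
   for every [z]: on the support of [x], [x_i - alpha psi_i] is the minimiser, and
   off it [psi_i = 0] while [omega_i] measures how far [0] is from optimal. The
   balance condition makes the left-hand side sum to a nonnegative number, so
   [Q_x (x - alpha psi) <= Q_x z / 2]. Finally, for [z = x + alpha lam (x* - x)],
   convexity of [Q_x] and [v^T A v >= lam |v|^2] give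
   [Q_x z <= alpha lam (F x* - F x)]. *)

(* The spectral theorem of the library is stated over an algebraically closed
   field, so eigenvalue bounds are transferred through the complexification. *)
Section RealSymmetricSpectrum.
Local Open Scope complex_scope.
Local Open Scope sesquilinear_scope.
Variables (R : rcfType) (n : nat) (A : 'M[R]_n).
Hypothesis A_sym : A^T = A.

Let AC := map_mx (real_complex R) A.
Let P := spectralmx AC.
Let D := spectral_diag AC.

Lemma complexified_real p q (M : 'M[R]_(p, q)) :
  map_mx (real_complex R) M \is a mxOver Num.real.
Proof. by apply/mxOverP => i j; apply/CrealP; rewrite mxE; exact: conjc_real. Qed.

Lemma complexified_hermsym : AC \is hermsymmx.
Proof.
rewrite realsym_hermsym ?complexified_real //.
by apply/is_hermitianmxP; rewrite expr0 scale1r map_mx_id // /AC map_trmx A_sym.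
Qed.

Let AC_spectral : AC = invmx P *m diag_mx D *m P.
Proof. exact/orthomx_spectralP/hermitian_normalmx/complexified_hermsym. Qed.

Let D_real j : (complex.Re (D 0 j))%:C = D 0 j.
Proof.
by apply: RRe_real; move/mxOverP: (hermitian_spectral_diag_real complexified_hermsym).
Qed.

Lemma spectral_diag_eigenvalue j : eigenvalue A (complex.Re (D 0 j)).
Proof.
rewrite eigenvalue_root_char -(fmorph_root (real_complex R)) map_char_poly.
rewrite -eigenvalue_root_char (_ : _ (complex.Re _) = D 0 j); last exact: D_real.
apply/eigenvalueP; exists (row j P); rewrite -/AC.
  have -> : row j P *m AC = row j (diag_mx D *m P).
    by rewrite -row_mul {1}AC_spectral !mulmxA mulmxV ?spectral_unit // mul1mx.
  by rewrite mul_diag_mx; apply/rowP => k; rewrite !mxE.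
apply/eqP => Pj0; move/unitarymxP: (spectral_unitarymx AC) => /(congr1 (row j)).
rewrite row_mul Pj0 mul0mx => /rowP/(_ j); rewrite !mxE eqxx => /eqP.
by rewrite eq_sym oner_eq0.
Qed.

Let coord (x : 'cV[R]_n) := P *m map_mx (real_complex R) x.
Let sq_coord x k := complex.Re (coord x k 0) ^+ 2 + complex.Im (coord x k 0) ^+ 2.

Lemma diagonalised_form (d : 'rV[R[i]]_n) (x : 'cV[R]_n) :
  let xc := map_mx (real_complex R) x in
  (xc^T *m (invmx P *m diag_mx d *m P) *m xc) 0 0 = \sum_k d 0 k * (sq_coord x k)%:C.
Proof.
move=> xc; set y := P *m xc.
have yT : xc^T *m invmx P = map_mx Num.conj y^T.
  rewrite invmx_unitary ?spectral_unitarymx // /y trmx_mul map_mxM.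
  by congr (_ *m _); apply/matrixP => i j; rewrite !mxE; apply/esym/conjc_real.
rewrite !mulmxA yT -mulmxA mul_mx_diag mxE; apply: eq_bigr => k _.
rewrite [(\matrix_(_, _) _) _ _]mxE -/y [map_mx _ _ _ _]mxE [y^T _ _]mxE.
by rewrite mulrAC mulrC /sq_coord /coord -/xc -/y add_Re2_Im2 normCK [y k 0 * _]mulrC.
Qed.

Lemma spectral_bounds (lo hi : R) :
  (forall mu, eigenvalue A mu -> lo <= mu) -> (forall mu, eigenvalue A mu -> mu <= hi) ->
  forall x : 'cV[R]_n,
  lo * (x^T *m x) 0 0 <= (x^T *m A *m x) 0 0 <= hi * (x^T *m x) 0 0.
Proof.
move=> lo_le le_hi x; pose xc := map_mx (real_complex R) x.
have embed (M : 'M[R]_n) :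
    ((x^T *m M *m x) 0 0)%:C = (xc^T *m map_mx (real_complex R) M *m xc) 0 0.
  by rewrite /xc map_trmx -!map_mxM [RHS]mxE.
have norm2 : (x^T *m x) 0 0 = \sum_k sq_coord x k.
  apply: complexI; rewrite -[x^T]mulmx1 embed map_mx1 rmorph_sum.
  rewrite -(mulVmx (spectral_unit AC)) -[invmx P]mulmx1 -diag_const_mx diagonalised_form.
  by apply: eq_bigr => k _; rewrite mxE mul1r.
have form : (x^T *m A *m x) 0 0 = \sum_k complex.Re (D 0 k) * sq_coord x k.
  apply: complexI; rewrite embed -/AC AC_spectral diagonalised_form rmorph_sum.
  by apply: eq_bigr => k _; rewrite rmorphM /= D_real.
have sq_ge0 k : 0 <= sq_coord x k by rewrite addr_ge0 ?sqr_ge0.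
have eig k := spectral_diag_eigenvalue k.
rewrite norm2 form !mulr_sumr; apply/andP; split; apply: ler_sum => k _.
  exact: ler_wpM2r (lo_le _ (eig k)).
exact: ler_wpM2r (le_hi _ (eig k)).
Qed.

End RealSymmetricSpectrum.

Section SoftThreshold.
Variable R : realFieldType.
Implicit Types k c y : R.

Definition soft_threshold k c : R := Num.max (`|c| - k) 0 * Num.sg c.

Lemma soft_thresholdE k c :
  soft_threshold k c = if `|c| <= k then 0 else c - k * Num.sg c.
Proof.
rewrite /soft_threshold; case: lerP => hck.
  by rewrite max_r ?mul0r // subr_le0.
by rewrite max_l ?subr_ge0 ?(ltW hck) // mulrBl mulrC -numEsg mulrC.
Qed.

Lemma soft_thresholdN k c : soft_threshold k (- c) = - soft_threshold k c.
Proof. by rewrite /soft_threshold normrN sgrN mulrN. Qed.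

Lemma soft_thresholdZ a k c : 0 < a ->
  soft_threshold (a * k) (a * c) = a * soft_threshold k c.
Proof.
move=> a_gt0; rewrite /soft_threshold normrM gtr0_norm // -mulrBr sgrM gtr0_sg //.
by rewrite mul1r mulrA maxr_pMr ?(ltW a_gt0) // mulr0.
Qed.

(* The residual [c - soft_threshold k c] is a subgradient of [k * `|.|] at
   [soft_threshold k c]: it is bounded by [k] and pairs with it to give [k * `|.|]. *)
Lemma soft_threshold_residual_norm k c : 0 <= k -> `|c - soft_threshold k c| <= k.
Proof.
move=> k_ge0; rewrite soft_thresholdE; case: (lerP `|c| k) => hck; first by rewrite subr0.
by rewrite opprB addrC subrK normrM normr_sg ger0_norm // ler_piMr // lern1 leq_b1.
Qed.

Lemma soft_threshold_residualM k c : 0 <= k ->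
  (c - soft_threshold k c) * soft_threshold k c = k * `|soft_threshold k c|.
Proof.
move=> k_ge0; rewrite soft_thresholdE; case: (lerP `|c| k) => hck.
  by rewrite normr0 !mulr0.
have c_neq0 : c != 0 by apply: contraTneq hck => ->; rewrite normr0 -leNgt.
have sg2 : Num.sg c ^+ 2 = 1 by rewrite sqr_sg c_neq0.
have -> : c - k * Num.sg c = Num.sg c * (`|c| - k) by rewrite mulrBr -numEsg mulrC.
rewrite normrM normr_sg c_neq0 mul1r ger0_norm ?subr_ge0 ?(ltW hck) //.
move: sg2 (numEsg c); set sg := Num.sg c; set m := `|c| => sg2 ->.
by rewrite -[RHS]mul1r -sg2; ring.
Qed.

Lemma soft_threshold_prox k c y : 0 <= k ->
  (soft_threshold k c - c) ^+ 2 + 2 * k * `|soft_threshold k c|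
    + (y - soft_threshold k c) ^+ 2 <= (y - c) ^+ 2 + 2 * k * `|y|.
Proof.
move=> k_ge0; have := soft_threshold_residualM c k_ge0.
have := soft_threshold_residual_norm c k_ge0; set s := soft_threshold k c.
move=> /(ler_wpM2r (normr_ge0 y)); rewrite -normrM => /(le_trans (ler_norm _)) ry sr.
nra.
Qed.

Section IstaModel.
Variables (g tau alpha x : R).
Hypotheses (alpha_gt0 : 0 < alpha) (tau_ge0 : 0 <= tau).

Definition ista_model y : R :=
  g * (y - x) + (2 * alpha)^-1 * (y - x) ^+ 2 + tau * `|y| - tau * `|x|.

Lemma ista_model_base : ista_model x = 0.
Proof. by rewrite /ista_model subrr addrK expr0n /= !mulr0 addr0. Qed.

Lemma ista_model_convex e t : 0 <= t <= 1 ->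
  ista_model (x + t * e) <=
  t * ista_model (x + e) + (t ^+ 2 - t) * ((2 * alpha)^-1 * e ^+ 2).
Proof.
case/andP=> t_ge0 t_le1.
have : `|x + t * e| <= (1 - t) * `|x| + t * `|x + e|.
  have -> : x + t * e = (1 - t) * x + t * (x + e) by ring.
  apply: le_trans (ler_normD _ _) _.
  by rewrite !normrM (ger0_norm t_ge0) ger0_norm // subr_ge0.
move/(ler_wpM2l tau_ge0); rewrite /ista_model; set ia := (2 * alpha)^-1; nra.
Qed.

Let alpha_neq0 : alpha != 0 := lt0r_neq0 alpha_gt0.
Let inv2alpha_ge0 : 0 <= (2 * alpha)^-1.
Proof. by rewrite invr_ge0 mulr_ge0 // ltW. Qed.

Let c := x - alpha * g.
Let s := soft_threshold (alpha * tau) c.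

(* Up to a positive factor and an additive constant, [ista_model y] is the
   proximal objective [(y - c)^2 + 2 alpha tau |y|], minimised by [s]. *)
Lemma ista_model_prox y : ista_model s + (2 * alpha)^-1 * (y - s) ^+ 2 <= ista_model y.
Proof.
have expand z : ista_model z = (2 * alpha)^-1 *
    ((z - c) ^+ 2 - (alpha * g) ^+ 2 + 2 * (alpha * tau) * `|z| - 2 * (alpha * tau) * `|x|).
  by rewrite /ista_model /c; field.
rewrite !expand -mulrDr ler_pM2l ?invr_gt0 ?mulr_gt0 //.
have := soft_threshold_prox c y (mulr_ge0 (ltW alpha_gt0) tau_ge0).
rewrite -/s; lra.
Qed.

Lemma ista_model_step z (p := alpha^-1 * (x - s)) :
  alpha / 2 * p ^+ 2 <= ista_model z - 2 * ista_model (x - alpha * p).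
Proof.
have -> : x - alpha * p = s by rewrite /p; field.
have -> : alpha / 2 * p ^+ 2 = (2 * alpha)^-1 * (x - s) ^+ 2 by rewrite /p; field.
have := ista_model_prox z; have := ista_model_prox x; rewrite ista_model_base.
have := mulr_ge0 inv2alpha_ge0 (sqr_ge0 (z - s)); lra.
Qed.

Lemma ista_model0_ge z : x = 0 ->
  - (alpha / 2 * soft_threshold tau g ^+ 2) <= ista_model z.
Proof.
move=> x0; apply: le_trans (ista_model_prox z); rewrite -[X in X <= _]addr0.
apply: lerD; last exact: mulr_ge0 inv2alpha_ge0 (sqr_ge0 _).
have -> : s = - (alpha * soft_threshold tau g).
  by rewrite /s /c x0 sub0r -mulrN soft_thresholdZ // soft_thresholdN mulrN.
have := soft_threshold_residualM g tau_ge0; set w := soft_threshold tau g => gw.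
rewrite /ista_model x0 !subr0 normr0 mulr0 subr0 normrN normrM (gtr0_norm alpha_gt0).
by rewrite [tau * _]mulrCA -gw le_eqVlt; apply/orP; left; apply/eqP; field.
Qed.

End IstaModel.
End SoftThreshold.

Lemma cV_dot_sum (R : pzSemiRingType) n (u v : 'cV[R]_n) :
  (u^T *m v) 0 0 = \sum_i u i 0 * v i 0.
Proof. by rewrite mxE; apply: eq_bigr => i _; rewrite mxE. Qed.

Lemma cV_dot_ge0 (R : realDomainType) n (v : 'cV[R]_n) : 0 <= (v^T *m v) 0 0.
Proof. by rewrite cV_dot_sum sumr_ge0 // => i _; rewrite -expr2 sqr_ge0. Qed.

Section IstaStep.
Variables (R : rcfType) (n : nat) (A : 'M[R]_n) (b : 'cV[R]_n) (tau alpha : R).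
Implicit Types (x v y z : 'cV[R]_n).

Definition ista_model_sum x v : R :=
  \sum_i ista_model (grad A b x i 0) tau alpha (x i 0) (v i 0).

Hypotheses (A_sym : A^T = A) (tau_ge0 : 0 <= tau) (alpha_gt0 : 0 < alpha).

Let F := Fobj A b tau.
Let alpha_neq0 : alpha != 0 := lt0r_neq0 alpha_gt0.
Let Q := ista_model_sum.

Lemma Fobj_expand x v : F (x + v) =
  F x + Q x (x + v) + 2^-1 * (v^T *m A *m v) 0 0 - (2 * alpha)^-1 * (v^T *m v) 0 0.
Proof.
have tr1 (M : 'M[R]_1) : M 0 0 = M^T 0 0 by rewrite mxE.
have xAv : (x^T *m A *m v) 0 0 = (v^T *m A *m x) 0 0.
  by rewrite tr1 !trmx_mul trmxK A_sym mulmxA.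
have bv : (b^T *m v) 0 0 = (v^T *m b) 0 0 by rewrite tr1 trmx_mul trmxK.
have -> : Q x (x + v) = (v^T *m grad A b x) 0 0 + (2 * alpha)^-1 * (v^T *m v) 0 0
                        + tau * l1norm (x + v) - tau * l1norm x.
  rewrite !cV_dot_sum /l1norm !mulr_sumr -!big_split -sumrB /=.
  by apply: eq_bigr => i _; rewrite /ista_model !mxE; ring.
have addE (M N : 'M[R]_1) : (M + N) 0 0 = M 0 0 + N 0 0 by rewrite mxE.
have oppE (M : 'M[R]_1) : (- M) 0 0 = - M 0 0 by rewrite mxE.
rewrite /F /Fobj /fq /grad !mulmxDr !raddfD /= !mulmxDl mulmxN !mulmxA.
by rewrite !addE oppE xAv bv; field.
Qed.

Lemma Fobj_step_le x v : (v^T *m A *m v) 0 0 <= alpha^-1 * (v^T *m v) 0 0 ->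
  F (x + v) <= F x + Q x (x + v).
Proof. by move=> vAv; rewrite Fobj_expand invfM; lra. Qed.

Lemma ista_model_sum_le_gap (lam : R) x y (e := y - x) :
  0 <= alpha * lam <= 1 -> lam * (e^T *m e) 0 0 <= (e^T *m A *m e) 0 0 ->
  Q x (x + (alpha * lam) *: e) <= alpha * lam * (F y - F x).
Proof.
move=> alpha_lam01 eAe.
have xe : x + e = y by rewrite /e addrC subrK.
have := Fobj_expand x e; rewrite xe => Fy.
have convex : Q x (x + (alpha * lam) *: e) <= alpha * lam * Q x (x + e)
    + ((alpha * lam) ^+ 2 - alpha * lam) * ((2 * alpha)^-1 * (e^T *m e) 0 0).
  rewrite /Q /ista_model_sum cV_dot_sum !mulr_sumr -big_split /=; apply: ler_sum => i _.
  by rewrite !mxE -expr2; exact: ista_model_convex.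
rewrite xe in convex.
have sq_t : (alpha * lam) ^+ 2 * (2 * alpha)^-1 = 2^-1 * alpha * lam * lam by field.
have := cV_dot_ge0 e; have := ler_wpM2l (proj1 (andP alpha_lam01)) eAe; nra.
Qed.

Lemma psiE x i : psi A b tau alpha x i 0 = if x i 0 != 0 then
  alpha^-1 * (x i 0 - soft_threshold (alpha * tau) (x i 0 - alpha * grad A b x i 0))
  else 0.
Proof. by rewrite mxE. Qed.

Lemma omegaE x i :
  omega A b tau x i 0 = if x i 0 != 0 then 0 else soft_threshold tau (grad A b x i 0).
Proof. by rewrite mxE soft_thresholdE. Qed.

Lemma ista_model_coord x i (c : R) (p := psi A b tau alpha x i 0) (w := omega A b tau x i 0)
    (model := ista_model (grad A b x i 0) tau alpha (x i 0)) :
  alpha / 2 * (p ^+ 2 - w ^+ 2) <= model c - 2 * model (x i 0 - alpha * p).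
Proof.
rewrite /p /w psiE omegaE; case: eqP => [x0 | _] /=.
  rewrite mulr0 subr0 /model ista_model_base expr0n /= sub0r mulrN mulr0 subr0.
  exact: ista_model0_ge.
by rewrite expr0n subr0; exact: ista_model_step.
Qed.

Lemma ista_model_sum_step x z (p := psi A b tau alpha x) (w := omega A b tau x) :
  alpha / 2 * (\sum_i p i 0 ^+ 2 - \sum_i w i 0 ^+ 2) <= Q x z - 2 * Q x (x - alpha *: p).
Proof.
rewrite /Q /ista_model_sum -sumrB !mulr_sumr -sumrB; apply: ler_sum => i _.
have -> : (x - alpha *: p) i 0 = x i 0 - alpha * p i 0 by rewrite !mxE.
exact: ista_model_coord.
Qed.

End IstaStep.

Theorem lemma2 (R : rcfType) (n : nat) (A : 'M[R]_n) (b : 'cV[R]_n)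
  (tau lam L alpha : R) (xstar xk : 'cV[R]_n) :
  symmx A -> posdef A ->
  eigenvalue A lam -> (forall mu, eigenvalue A mu -> lam <= mu) ->
  eigenvalue A L -> (forall mu, eigenvalue A mu -> mu <= L) ->
  0 < lam ->
  0 <= tau ->
  (forall y : 'cV[R]_n, Fobj A b tau xstar <= Fobj A b tau y) ->
  0 < alpha -> alpha <= L^-1 ->
  enorm (omega A b tau xk) <= enorm (psi A b tau alpha xk) ->
  Fobj A b tau (xk - alpha *: psi A b tau alpha xk) - Fobj A b tau xstar
    <= (1 - 2^-1 * lam * alpha) * (Fobj A b tau xk - Fobj A b tau xstar).
Proof.
move=> A_sym _ _ lam_min L_eig L_max lam_gt0 tau_ge0 _ alpha_gt0 alpha_le balance.
set x := xk; set p := psi A b tau alpha x; set w := omega A b tau x.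
set Q := ista_model_sum A b tau alpha x.
have L_gt0 : 0 < L := lt_le_trans lam_gt0 (lam_min L L_eig).
have L_le : L <= alpha^-1 by rewrite -(invrK L) lef_pV2 ?posrE ?invr_gt0.
have alpha_lam01 : 0 <= alpha * lam <= 1.
  apply/andP; split; first exact: mulr_ge0 (ltW alpha_gt0) (ltW lam_gt0).
  by rewrite -(mulfV (lt0r_neq0 alpha_gt0)) ler_pM2l // (le_trans (lam_min L L_eig)).
have quad := spectral_bounds A_sym lam_min L_max.
have descent : Fobj A b tau (x - alpha *: p) <= Fobj A b tau x + Q (x - alpha *: p).
  apply: Fobj_step_le => //; apply: le_trans (proj2 (andP (quad _))) _.
  by apply: ler_wpM2r L_le; exact: cV_dot_ge0.
have gap : Q (x + (alpha * lam) *: (xstar - x))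
           <= alpha * lam * (Fobj A b tau xstar - Fobj A b tau x).
  exact: ista_model_sum_le_gap (proj1 (andP (quad _))).
have step : alpha / 2 * (\sum_i p i 0 ^+ 2 - \sum_i w i 0 ^+ 2)
             <= Q (x + (alpha * lam) *: (xstar - x)) - 2 * Q (x - alpha *: p).
  exact: ista_model_sum_step.
have norms : \sum_i w i 0 ^+ 2 <= \sum_i p i 0 ^+ 2.
  by move: balance; rewrite /enorm ler_sqrt // sumr_ge0 // => i _; rewrite sqr_ge0.
have : 0 <= alpha / 2 * (\sum_i p i 0 ^+ 2 - \sum_i w i 0 ^+ 2).
  by rewrite mulr_ge0 ?subr_ge0 // divr_ge0 // ltW.
rewrite (mulrAC _ lam); lra.
Qed.
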